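(* Let $n,k$ be positive integers, let $\mathbf{U} = (u_{ij}) \in \{0, 1\}^{n \times k}$ be a binary clustering matrix with $\sum_{j=1}^k u_{ij} = 1$ for every $i$, such that $\mathbf{U}^T\mathbf{U}$ is invertible, let $\sigma$ be an element-wise nonlinear function, and define $\mathbf{C} = \mathbf{U} (\mathbf{U}^T \mathbf{U})^{-1} \mathbf{U}^T \in \mathbb{R}^{n\times n}$. Then for every $\mathbf{x} \in \mathbb{R}^{n}$, \[ \sigma(\mathbf{C} \mathbf{x}) = \mathbf{C}^T \sigma( \mathbf{C} \mathbf{x}). \]
   Context: Here $\sigma:\mathbb{R}\to\mathbb{R}$ is applied coordinate-wise to vectors. The condition $\sum_j u_{ij}=1$ means every row of $\mathbf{U}$ contains exactly one entry equal to $1$; invertibility of $\mathbf{U}^T\mathbf{U}$ (a diagonal matrix of cluster sizes) means every cluster is nonempty. *)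

From mathcomp Require Import all_boot all_order all_algebra.
Set Implicit Arguments. Unset Strict Implicit. Unset Printing Implicit Defensive.
Import Order.TTheory GRing.Theory Num.Theory.
Local Open Scope ring_scope.

Definition clustering_matrix (R : numFieldType) (n k : nat) (U : 'M[R]_(n, k)) : Prop :=
  (forall i j, U i j = 0 \/ U i j = 1) /\
  (forall i, \sum_(j < k) U i j = 1).

Definition clust_proj (R : numFieldType) (n k : nat) (U : 'M[R]_(n, k)) : 'M[R]_n :=
  U *m invmx (U^T *m U) *m U^T.

From mathcomp Require Import all_boot all_order all_algebra.
From mathcomp Require Import reals.
Import Order.TTheory GRing.Theory Num.Theory.
Local Open Scope ring_scope.

Set Implicit Arguments.
Unset Strict Implicit.
Unset Printing Implicit Defensive.

(* Since every row of U has a single entry 1 and zeros elsewhere, σ commutes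
   with multiplication by U.  Hence σ(Cx) = σ(U w) = U σ(w) stays in the column
   space of U, which the symmetric projection C fixes. *)

Section ClusteringMatrix.

Variables (R : numFieldType) (n k : nat) (U : 'M[R]_(n, k)).
Hypothesis hU : clustering_matrix U.

Lemma clustering_row_delta (i : 'I_n) :
  exists c, forall j, U i j = (j == c)%:R.
Proof.
case: hU => U01 U_rowsum.
have U_ge0 j : 0 <= U i j by case: (U01 i j) => ->; rewrite ?ler01.
have [c /eqP Uic1 | no_one] := pickP (fun j => U i j == 1); last first.
  have : \sum_(j < k) U i j = 0.
    by apply: big1 => j _; case: (U01 i j) => // Uij1; move: (no_one j); rewrite Uij1 eqxx.
  by rewrite U_rowsum => /eqP; rewrite oner_eq0.
exists c => j; have [-> // | j_neq_c] := eqVneq j c.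
have rest0 : \sum_(l < k | l != c) U i l = 0.
  have := U_rowsum i; rewrite (bigD1 c) //= Uic1 => rowsum.
  by apply: (addrI 1); rewrite rowsum addr0.
by rewrite (psumr_eq0P (fun l _ => U_ge0 l) rest0).
Qed.

Lemma clustering_row_sum (i : 'I_n) :
  exists c, forall F : 'I_k -> R, \sum_j U i j * F j = F c.
Proof.
have [c Ui] := clustering_row_delta i; exists c => F.
rewrite (bigD1 c) //= big1 => [|l /negbTE l_neq_c]; last by rewrite Ui l_neq_c mul0r.
by rewrite Ui eqxx mul1r addr0.
Qed.

Lemma map_mx_clustering_mul (f : R -> R) (m : nat) (w : 'M[R]_(k, m)) :
  map_mx f (U *m w) = U *m map_mx f w.
Proof.
apply/matrixP => i j; have [c row_sum] := clustering_row_sum i.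
by rewrite !mxE !row_sum mxE.
Qed.

End ClusteringMatrix.

Lemma trmx_clust_proj (R : numFieldType) (n k : nat) (U : 'M[R]_(n, k)) :
  (clust_proj U)^T = clust_proj U.
Proof. by rewrite /clust_proj !trmx_mul trmxK trmx_inv trmx_mul trmxK mulmxA. Qed.

Lemma clust_proj_mulmx (R : numFieldType) (n k : nat) (U : 'M[R]_(n, k)) :
  U^T *m U \in unitmx -> clust_proj U *m U = U.
Proof. by move=> UtU_unit; rewrite /clust_proj -!mulmxA mulVmx ?mulmx1. Qed.

Theorem lemma2 (R : realType) (n k : nat) (hn : (0 < n)%N) (hk : (0 < k)%N)
  (U : 'M[R]_(n, k)) (hU : clustering_matrix U) (hinv : U^T *m U \in unitmx)
  (sigma : R -> R) (x : 'cV[R]_n) :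
  map_mx sigma (clust_proj U *m x) = (clust_proj U)^T *m map_mx sigma (clust_proj U *m x).
Proof.
have -> : clust_proj U *m x = U *m (invmx (U^T *m U) *m U^T *m x).
  by rewrite /clust_proj !mulmxA.
rewrite (map_mx_clustering_mul hU) trmx_clust_proj.
by rewrite mulmxA clust_proj_mulmx.
Qed.
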